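(* Let $X$ be a real Banach space and let $T\subset X\times X^*$ be a maximal monotone operator which is a linear subspace of $X\times X^*$. Then (1) $T^\vdash\subset\{(x,x^* )\mid \varphi_T(x,x^* )=0\}$; (2) $T\cap T^\vdash=T\cap\{(x,x^* )\mid \langle x,x^*\rangle=0\}$.
   Context: $\langle x,x^*\rangle=x^*(x)$. Operators $X\rightrightarrows X^*$ are identified with subsets of $X\times X^*$; $T$ is monotone if $\langle x-y,x^*-y^*\rangle\ge0$ for all $(x,x^* ),(y,y^* )\in T$, maximal monotone if moreover it is maximal under inclusion among monotone operators. The Fitzpatrick function of $T$ is $\varphi_T(x,x^* )=\sup_{(y,y^* )\in T}\big(\langle x,y^*\rangle+\langle y,x^*\rangle-\langle y,y^*\rangle\big)$. For $B\subset X\times X^*$, $B^\vdash=\{(y,y^* )\mid \langle x,y^*\rangle+\langle y,x^*\rangle=0\ \forall (x,x^* )\in B\}$. *)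

From HB Require Import structures.
From mathcomp Require Import all_boot all_order all_algebra.
From mathcomp Require Import all_classical all_reals all_analysis.
Set Implicit Arguments. Unset Strict Implicit. Unset Printing Implicit Defensive.
Import Order.TTheory GRing.Theory Num.Theory.
Import numFieldNormedType.Exports.
Local Open Scope classical_set_scope.
Local Open Scope ring_scope.

(* Elements of X^* are represented as functions X -> R which are linear and
   continuous; the pairing <x, x^*> is application x^* x. *)
Section Defs.
Variables (R : realType) (X : normedModType R).

Definition is_dual (f : X -> R) : Prop :=
  (forall (a : R) (u v : X), f (a *: u + v) = a * f u + f v) /\ continuous f.

Definition XXs : set (X * (X -> R)) := [set p | is_dual p.2].

Definition monotone (T : set (X * (X -> R))) : Prop :=
  T `<=` XXs /\
  forall p q, T p -> T q -> 0 <= (p.2 - q.2) (p.1 - q.1).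

Definition maximal_monotone (T : set (X * (X -> R))) : Prop :=
  monotone T /\ forall S, monotone S -> T `<=` S -> S = T.

Definition linear_subspace (T : set (X * (X -> R))) : Prop :=
  T `<=` XXs /\ T (0, fun _ => 0) /\
  (forall p q, T p -> T q -> T (p.1 + q.1, fun x => p.2 x + q.2 x)) /\
  (forall (a : R) p, T p -> T (a *: p.1, fun x => a * p.2 x)).

Definition fitzpatrick (T : set (X * (X -> R))) (p : X * (X -> R)) : \bar R :=
  ereal_sup [set ((q.2 p.1 + p.2 q.1 - q.2 q.1)%:E) | q in T].

Definition perp_set (B : set (X * (X -> R))) : set (X * (X -> R)) :=
  [set q | XXs q /\ forall p, B p -> p.2 q.1 + q.2 p.1 = 0].
End Defs.

From Pilot Require Import Defs.
From mathcomp Require Import all_boot all_order all_algebra.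
From mathcomp Require Import all_classical all_reals all_analysis.
From mathcomp Require Import ring lra.
Import numFieldNormedType.Exports.
Import Order.TTheory GRing.Theory Num.Theory.
Local Open Scope classical_set_scope.
Local Open Scope ring_scope.

(* Since 0 lies in T, monotonicity makes the pairing
   nonnegative on T, which bounds every term of the Fitzpatrick supremum at a
   point of T^⊢ by 0.  For (2), if p in T has <p> = 0 then the pairing along the
   line p + t q inside T is a quadratic in t with no constant term; its
   nonnegativity forces the linear coefficient <q, p^*> + <p, q^*> to vanish. *)

Lemma quadratic_ge0_linear_coef_eq0 (R : realFieldType) (a b : R) :
  (forall t, 0 <= t * a + t ^+ 2 * b) -> a = 0.
Proof.
move=> quad_ge0.
have b_ge0 : 0 <= b by have := quad_ge0 1; have := quad_ge0 (-1); rewrite !expr2; lra.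
have b1_neq0 : b + 1 != 0 by rewrite lt0r_neq0 // ltr_wpDl.
have := quad_ge0 (- (a / (b + 1))).
have -> : - (a / (b + 1)) * a + (- (a / (b + 1))) ^+ 2 * b = - (a / (b + 1)) ^+ 2.
  by rewrite !expr2; field.
rewrite oppr_ge0 => sqr_le0.
have : (a / (b + 1)) ^+ 2 == 0 by rewrite eq_le sqr_le0 sqr_ge0.
by rewrite expf_eq0 /= mulf_eq0 invr_eq0 (negPf b1_neq0) orbF => /eqP.
Qed.

Section MonotoneSubspace.
Variables (R : realType) (X : normedModType R).
Implicit Types (T : set (X * (X -> R))) (p q : X * (X -> R)).

Lemma pairing_add_scale p q (t : R) : XXs p -> XXs q ->
  p.2 (p.1 + t *: q.1) + t * q.2 (p.1 + t *: q.1)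
  = p.2 p.1 + t * (q.2 p.1 + p.2 q.1) + t ^+ 2 * q.2 q.1.
Proof.
move=> [p_lin _] [q_lin _].
by rewrite (addrC p.1) p_lin q_lin expr2; ring.
Qed.

Lemma monotone_pairing_ge0 {T q} :
  Defs.monotone T -> T (0, fun _ => 0) -> T q -> 0 <= q.2 q.1.
Proof. by move=> [_ Tmon] T0 Tq; have := Tmon q _ Tq T0; rewrite /= !subr0. Qed.

Lemma perp_fitzpatrick_eq0 T :
  Defs.monotone T -> T (0, fun _ => 0) ->
  perp_set T `<=` [set p | fitzpatrick T p = 0%:E].
Proof.
move=> Tmon T0 p [_ p_perp] /=; apply/eqP; rewrite eq_le; apply/andP; split.
  apply: ge_ereal_sup => _ [q Tq <-]; rewrite lee_fin.
  have := p_perp q Tq; have := monotone_pairing_ge0 Tmon T0 Tq; lra.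
apply: ereal_sup_ubound; exists (0, fun _ => 0) => //=.
by have := p_perp _ T0; rewrite /= => p0; congr (_%:E); lra.
Qed.

Lemma perp_pairing_eq0 T p : T p -> perp_set T p -> p.2 p.1 = 0.
Proof. by move=> Tp [_ /(_ p Tp)]; lra. Qed.

Lemma isotropic_perp T p : Defs.monotone T -> linear_subspace T ->
  T p -> p.2 p.1 = 0 -> perp_set T p.
Proof.
move=> Tmon [TX [T0 [TD TZ]]] Tp p0; split; first exact: TX.
move=> q Tq; apply: (@quadratic_ge0_linear_coef_eq0 _ _ (q.2 q.1)) => t.
have Tline := TD _ _ Tp (TZ t q Tq).
have := monotone_pairing_ge0 Tmon T0 Tline.
rewrite /= pairing_add_scale; [by rewrite p0 add0r | exact: TX p Tp | exact: TX q Tq].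
Qed.

End MonotoneSubspace.

Theorem lemma1 (R : realType) (X : completeNormedModType R)
  (T : set (X * (X -> R))) :
  maximal_monotone T -> linear_subspace T ->
  perp_set T `<=` [set p | fitzpatrick T p = 0%:E] /\
  T `&` perp_set T = T `&` [set p | p.2 p.1 = 0].
Proof.
move=> [Tmon _] Tsub; have [_ [T0 _]] := Tsub.
split; first exact: perp_fitzpatrick_eq0.
apply/seteqP; split=> p [Tp Hp]; split=> //=.
  exact: perp_pairing_eq0 Hp.
exact: isotropic_perp.
Qed.
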